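(* Let $N\ge1$ be an integer and $a,b$ complex numbers such that all denominators below are nonzero. Then \[ B^{[N]}(a,b)=\frac{1}{N}\sum_{n=0}^N \frac{(1+n)_{N-n}}{(a+n)_{N-n}}\,\frac{(1+N-n)_n}{(b+N-n)_n}, \] where $B^{[N]}(a,b)=\dfrac{(a+b)_N\,(N-1)!}{(a)_N\,(b)_N}$.
   Context: $(x)_m=x(x+1)\cdots(x+m-1)$ denotes the rising factorial, with $(x)_0=1$. The truncated beta function is $B^{[N]}(a,b)=\frac{a+b}{ab}\prod_{n=1}^{N-1}\frac{(a+b+n)n}{(a+n)(b+n)}=\frac{(a+b)_N(N-1)!}{(a)_N(b)_N}$. *)

From HB Require Import structures.
From mathcomp Require Import all_boot all_order all_algebra.
From mathcomp Require Import complex.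
From mathcomp Require Import reals.
Set Implicit Arguments. Unset Strict Implicit. Unset Printing Implicit Defensive.
Import Order.TTheory GRing.Theory Num.Theory.
Local Open Scope ring_scope.

Definition rising {R : nzRingType} (x : R) (m : nat) : R :=
  \prod_(i < m) (x + i%:R).

Definition truncBeta {R : fieldType} (N : nat) (a b : R) : R :=
  rising (a + b) N * (N.-1)`!%:R / (rising a N * rising b N).

(* Split (a)_N = (a)_n (a+n)_(N-n) and (b)_N = (b)_(N-n) (b+N-n)_n, and note
   (1+n)_(N-n) = N!/n!, (1+N-n)_n = N!/(N-n)!.  The n-th summand then becomes
   N!/((a)_N (b)_N) * C(N,n) (a)_n (b)_(N-n), and the Chu-Vandermonde identity
   sum_n C(N,n) (a)_n (b)_(N-n) = (a+b)_N collapses the sum to N B^[N](a,b). *)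

From HB Require Import structures.
From mathcomp Require Import all_boot all_order all_algebra.
From mathcomp Require Import complex.
From mathcomp Require Import reals.
From mathcomp Require Import ring.
Set Implicit Arguments.
Unset Strict Implicit.
Unset Printing Implicit Defensive.

Import Order.TTheory GRing.Theory Num.Theory.
Local Open Scope ring_scope.

Section RisingFactorial.
Variable R : nzRingType.

Lemma rising0 (x : R) : rising x 0 = 1.
Proof. by rewrite /rising big_ord0. Qed.

Lemma risingS (x : R) m : rising x m.+1 = rising x m * (x + m%:R).
Proof. by rewrite /rising big_ord_recr. Qed.

Lemma risingD (x : R) m k : rising x (m + k) = rising x m * rising (x + m%:R) k.
Proof.
elim: k => [|k IHk]; first by rewrite addn0 rising0 mulr1.
by rewrite addnS !risingS IHk natrD addrA mulrA.
Qed.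

Lemma rising1 m : rising (1 : R) m = m`!%:R.
Proof.
elim: m => [|m IHm]; first by rewrite rising0.
by rewrite risingS IHm factS mulnC natrM -natr1 addrC.
Qed.

Lemma factD_rising n m : (n + m)%N`!%:R = n`!%:R * rising (1 + n%:R : R) m.
Proof. by rewrite -!rising1 risingD. Qed.

End RisingFactorial.

Lemma rising_Vandermonde (R : comNzRingType) (a b : R) N :
  \sum_(n < N.+1) 'C(N, n)%:R * (rising a n * rising b (N - n)) = rising (a + b) N.
Proof.
elim: N => [|N IHN]; first by rewrite big_ord1 /= !rising0 !mulr1.
have split_factor (i : 'I_N.+1) :
    rising a i * rising b (N - i) * (a + b + N%:R) =
    rising a i.+1 * rising b (N - i) + rising a i * rising b (N.+1 - i).
  have le_iN : (i <= N)%N by rewrite -ltnS.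
  have -> : N%:R = i%:R + (N - i)%:R :> R by rewrite -natrD subnKC.
  by rewrite (subSn le_iN) !risingS; ring.
rewrite risingS -IHN mulr_suml.
under [in RHS]eq_bigr => i _ do rewrite -mulrA split_factor mulrDr.
rewrite [RHS]big_split /= big_ord_recl /=.
under eq_bigr => i _ do rewrite binS natrD mulrDl subSS.
rewrite big_split /= [X in _ + X]addrC addrCA; congr (_ + _).
rewrite big_ord_recr /= (bin_small (ltnSn N)) mul0r addr0.
by rewrite [RHS]big_ord_recl /= !bin0.
Qed.

Section CharZero.
Variables (F : fieldType) (F_char0 : has_pchar0 F).

Let fact_neq0 k : k`!%:R != 0 :> F.
Proof. by rewrite (pcharf0P F).1 // -lt0n fact_gt0. Qed.

Lemma truncBeta_fact N (a b : F) : (0 < N)%N ->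
  truncBeta N a b = N%:R^-1 * (N`!%:R / (rising a N * rising b N) * rising (a + b) N).
Proof.
case: N => [//|N] _; rewrite /truncBeta factS natrM /=.
have N1_neq0 : N.+1%:R != 0 :> F by rewrite (pcharf0P F).1.
by rewrite -!mulrA mulKf //; ring.
Qed.

Lemma rising_beta_summand N n (a b : F) : (n <= N)%N ->
  rising a N != 0 -> rising b N != 0 ->
  (rising (1 + n%:R) (N - n) / rising (a + n%:R) (N - n)) *
  (rising (1 + (N - n)%:R) n / rising (b + (N - n)%:R) n) =
  N`!%:R / (rising a N * rising b N) * ('C(N, n)%:R * (rising a n * rising b (N - n))).
Proof.
move=> le_nN; rewrite -[in rising a N](subnKC le_nN) -[in rising b N](subnK le_nN).
rewrite !risingD !mulf_eq0 !negb_or => /andP[an_neq0 A_neq0] /andP[bn_neq0 B_neq0].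
have -> : rising (1 + n%:R) (N - n) = N`!%:R / n`!%:R :> F.
  by rewrite -{2}(subnKC le_nN) factD_rising mulrC mulKf.
have -> : rising (1 + (N - n)%:R) n = N`!%:R / (N - n)`!%:R :> F.
  by rewrite -{2}(subnK le_nN) factD_rising mulrC mulKf.
rewrite -(bin_fact le_nN) !natrM; field.
by rewrite !fact_neq0 an_neq0 A_neq0 bn_neq0 B_neq0.
Qed.

End CharZero.

Local Open Scope complex_scope.

Theorem proposition2p1 (R : realType) (N : nat) (a b : R[i])
  (hN : (1 <= N)%N)
  (ha : rising a N != 0) (hb : rising b N != 0)
  (han : forall n : nat, (n <= N)%N -> rising (a + n%:R) (N - n) != 0)
  (hbn : forall n : nat, (n <= N)%N -> rising (b + (N - n)%:R) n != 0) :
  truncBeta N a b =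
  N%:R^-1 * \sum_(0 <= n < N.+1)
     (rising (1 + n%:R) (N - n) / rising (a + n%:R) (N - n)) *
     (rising (1 + (N - n)%:R) n / rising (b + (N - n)%:R) n).
Proof.
have char0 : has_pchar0 R[i] := pchar_num _.
rewrite big_mkord.
under eq_bigr => n _ do rewrite (rising_beta_summand char0 (ltnSE (ltn_ord n)) ha hb).
by rewrite -mulr_sumr rising_Vandermonde truncBeta_fact.
Qed.
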